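(* Let $k,l,N$ be positive integers with $l>1$, and let proper trigonometric polynomials $\mu_0,\dots,\mu_N$ and $\varphi_1,\dots,\varphi_N$ on $\mathbb{T}^2$ satisfy $$-\partial_1^k\varphi_1=\mu_0,\qquad \partial_2^l\varphi_j-\partial_1^k\varphi_{j+1}=\mu_j\ (j=1,\dots,N-1),\qquad \partial_2^l\varphi_N=\mu_N.$$ Then $$\sum_{j=1}^N\|\varphi_j\|_{W_2^{\frac{k-1}{2},0}(\mathbb{T}^2)}\leqslant C\sum_{j=0}^N\|\mu_j\|_{L^1(\mathbb{T}^2)},$$ where $C$ does not depend on the functions involved.
   Context: The torus is parametrised by $t\mapsto e^{2\pi it}$; $\partial_1,\partial_2$ are derivatives in the parameters; Fourier coefficients are $\hat f(m,n)$. A function is proper if $\hat f(m,n)=0$ whenever $m=0$ or $n=0$. For $\alpha,\beta\geqslant0$, $W_2^{\alpha,\beta}(\mathbb{T}^2)$ consists of distributions $f$ with $\{(1+m^2)^{\alpha/2}(1+n^2)^{\beta/2}\hat f(m,n)\}\in l^2(\mathbb{Z}^2)$, normed by the $l^2$-norm of this sequence. *)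

From Stdlib Require Import Reals ZArith List.
From Coquelicot Require Import Coquelicot.
Open Scope R_scope.

(* A function on T^2 is represented by its Fourier coefficients
   c m n = \hat f(m,n); a trigonometric polynomial is such a family
   vanishing outside a finite box [-M,M]^2. *)
Definition Coef := Z -> Z -> C.

Definition zrange (M : nat) : list Z :=
  map (fun i => (Z.of_nat i - Z.of_nat M)%Z) (seq 0 (2 * M + 1)).

Definition boxsumR (M : nat) (g : Z -> Z -> R) : R :=
  fold_right Rplus 0 (map (fun m => fold_right Rplus 0 (map (fun n => g m n) (zrange M))) (zrange M)).

Definition boxsumC (M : nat) (g : Z -> Z -> C) : C :=
  fold_right Cplus (RtoC 0) (map (fun m => fold_right Cplus (RtoC 0) (map (fun n => g m n) (zrange M))) (zrange M)).

Definition supported (M : nat) (c : Coef) : Prop :=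
  forall m n, (Z.of_nat M < Z.abs m)%Z \/ (Z.of_nat M < Z.abs n)%Z -> c m n = RtoC 0.

Definition proper (c : Coef) : Prop :=
  forall m n, m = 0%Z \/ n = 0%Z -> c m n = RtoC 0.

Definition cexpi (t : R) : C := (cos t, sin t).

(* the trigonometric polynomial with coefficients c (supported in the box),
   evaluated at the point (e^{2 pi i x}, e^{2 pi i y}) *)
Definition trig_eval (M : nat) (c : Coef) (x y : R) : C :=
  boxsumC M (fun m n => Cmult (c m n) (cexpi (2 * PI * (IZR m * x + IZR n * y)))).

Fixpoint Cpown (z : C) (k : nat) : C :=
  match k with O => RtoC 1 | S k' => Cmult z (Cpown z k') end.

(* derivatives in the parameters, on Fourier coefficients:
   \hat{\partial_1^k f}(m,n) = (2 pi i m)^k \hat f(m,n), etc. *)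
Definition dpar1 (k : nat) (c : Coef) : Coef :=
  fun m n => Cmult (Cpown (0, 2 * PI * IZR m) k) (c m n).
Definition dpar2 (l : nat) (c : Coef) : Coef :=
  fun m n => Cmult (Cpown (0, 2 * PI * IZR n) l) (c m n).

(* L^1(T^2) norm (T^2 has measure 1 in the parameters (x,y) in [0,1]^2) *)
Definition L1norm (M : nat) (c : Coef) : R :=
  RInt (fun x => RInt (fun y => Cmod (trig_eval M c x y)) 0 1) 0 1.

Definition Wnorm (M : nat) (alpha beta : R) (c : Coef) : R :=
  sqrt (boxsumR M (fun m n =>
     Rpower (1 + IZR m ^ 2) alpha * Rpower (1 + IZR n ^ 2) beta * (Cmod (c m n)) ^ 2)).

Definition sumR (a b : nat) (f : nat -> R) : R :=
  fold_right Rplus 0 (map f (seq a (S b - a))).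

(* On the Fourier side the equations decouple: at a frequency (m, n) with m, n <> 0 they
   form a chain linking the values phi_j(m, n) through the symbols A = |2 pi m|^k and
   B = |2 pi n|^l, the errors mu_j(m, n) being bounded by the L^1 norms of the mu_j.
   Walking along the chain from the end where the symbol dominates gives
   |phi_j(m, n)| (A + B) <= 2 N sum_j |mu_j|_1.  So the weighted square
   (1 + m^2)^((k-1)/2) |phi_j(m, n)|^2 is at most a constant times (sum_j |mu_j|_1)^2 times
   the kernel |m|^(k-1) / (|m|^k + |n|^l)^2, whose sum over all frequencies is finite
   because l > 1. *)

From Stdlib Require Import Reals ZArith List Lia Lra Psatz.
From Coquelicot Require Import Coquelicot.
Open Scope R_scope.

Definition sumL {A} (L : list A) (g : A -> R) : R := fold_right Rplus 0 (map g L).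
Definition sumLC {A} (L : list A) (g : A -> C) : C := fold_right Cplus (RtoC 0) (map g L).

Lemma boxsumR_sumL M g : boxsumR M g = sumL (zrange M) (fun m => sumL (zrange M) (g m)).
Proof. reflexivity. Qed.

Lemma boxsumC_sumLC M g : boxsumC M g = sumLC (zrange M) (fun m => sumLC (zrange M) (g m)).
Proof. reflexivity. Qed.

Lemma sumR_sumL a b f : sumR a b f = sumL (seq a (S b - a)) f.
Proof. reflexivity. Qed.

Section ListSums.
Context {A : Type}.
Implicit Types (L : list A) (g h : A -> R).

Lemma sumL_nil g : sumL nil g = 0.
Proof. reflexivity. Qed.

Lemma sumL_cons x L g : sumL (x :: L) g = g x + sumL L g.
Proof. reflexivity. Qed.

Lemma sumL_app L1 L2 g : sumL (L1 ++ L2) g = sumL L1 g + sumL L2 g.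
Proof.
  induction L1 as [|x L1 IH]; simpl app; [rewrite sumL_nil; ring|].
  rewrite !sumL_cons, IH; ring.
Qed.

Lemma sumL_ext L g h : (forall i, In i L -> g i = h i) -> sumL L g = sumL L h.
Proof.
  induction L as [|x L IH]; intros H; [reflexivity|].
  rewrite !sumL_cons, H by (simpl; auto). f_equal.
  apply IH. intros; apply H; simpl; auto.
Qed.

Lemma sumL_le L g h : (forall i, In i L -> g i <= h i) -> sumL L g <= sumL L h.
Proof.
  induction L as [|x L IH]; intros H; [apply Rle_refl|].
  rewrite !sumL_cons. apply Rplus_le_compat; [|apply IH]; intros; apply H; simpl; auto.
Qed.

Lemma sumL_plus L g h : sumL L (fun i => g i + h i) = sumL L g + sumL L h.
Proof.
  induction L as [|x L IH]; [rewrite !sumL_nil; simpl; ring|].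
  rewrite !sumL_cons, IH; ring.
Qed.

Lemma sumL_scal L g a : sumL L (fun i => a * g i) = a * sumL L g.
Proof.
  induction L as [|x L IH]; [rewrite !sumL_nil; simpl; ring|].
  rewrite !sumL_cons, IH; ring.
Qed.

Lemma sumL_const L a : sumL L (fun _ => a) = INR (length L) * a.
Proof.
  induction L as [|x L IH]; [rewrite !sumL_nil; simpl; ring|].
  rewrite sumL_cons, IH; simpl length; rewrite S_INR; ring.
Qed.

Lemma sumL_nonneg L g : (forall i, In i L -> 0 <= g i) -> 0 <= sumL L g.
Proof.
  intros H. replace 0 with (sumL L (fun _ => 0)) by (rewrite sumL_const; ring).
  apply sumL_le; auto.
Qed.

Lemma sumL_ge_term L g j : (forall i, In i L -> 0 <= g i) -> In j L -> g j <= sumL L g.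
Proof.
  induction L as [|x L IH]; intros H Hj; [destruct Hj|]. rewrite sumL_cons.
  assert (Hx : 0 <= g x) by (apply H; simpl; auto).
  assert (HL : forall i, In i L -> 0 <= g i) by (intros; apply H; simpl; auto).
  destruct Hj as [<-|Hj].
  - pose proof (sumL_nonneg L g HL). lra.
  - pose proof (IH HL Hj). lra.
Qed.

Lemma Cmod_sumLC L (g : A -> C) : Cmod (sumLC L g) <= sumL L (fun i => Cmod (g i)).
Proof.
  induction L as [|x L IH]; unfold sumLC, sumL in *; simpl; [rewrite Cmod_0; lra|].
  eapply Rle_trans; [apply Cmod_triangle | lra].
Qed.

Lemma sumLC_minus L (g h : A -> C) :
  Cminus (sumLC L g) (sumLC L h) = sumLC L (fun i => Cminus (g i) (h i)).
Proof.
  induction L as [|x L IH]; unfold sumLC in *; simpl; [apply injective_projections; simpl; ring|].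
  rewrite <- IH. destruct (g x), (h x), (fold_right Cplus (RtoC 0) (map g L)),
    (fold_right Cplus (RtoC 0) (map h L)).
  apply injective_projections; simpl; ring.
Qed.

Lemma sumLC_mult L (g : A -> C) w : Cmult (sumLC L g) w = sumLC L (fun i => Cmult (g i) w).
Proof.
  induction L as [|x L IH]; unfold sumLC in *; simpl; destruct w;
    [apply injective_projections; simpl; ring|].
  rewrite <- IH. destruct (g x), (fold_right Cplus (RtoC 0) (map g L)).
  apply injective_projections; simpl; ring.
Qed.

Lemma fst_sumLC L (g : A -> C) : fst (sumLC L g) = sumL L (fun i => fst (g i)).
Proof. induction L as [|x L IH]; unfold sumLC, sumL in *; simpl; [|rewrite IH]; reflexivity. Qed.

Lemma snd_sumLC L (g : A -> C) : snd (sumLC L g) = sumL L (fun i => snd (g i)).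
Proof. induction L as [|x L IH]; unfold sumLC, sumL in *; simpl; [|rewrite IH]; reflexivity. Qed.

End ListSums.

Lemma sumL_swap {A B} (L : list A) (L' : list B) (g : A -> B -> R) :
  sumL L (fun i => sumL L' (g i)) = sumL L' (fun j => sumL L (fun i => g i j)).
Proof.
  induction L as [|x L IH].
  - rewrite sumL_nil, (sumL_ext _ _ (fun _ => 0)), sumL_const by reflexivity. ring.
  - rewrite sumL_cons, IH, <- sumL_plus. apply sumL_ext. intros; rewrite sumL_cons; ring.
Qed.

Lemma sumL_delta (L : list Z) (a : Z -> R) z0 : NoDup L -> In z0 L ->
  sumL L (fun z => if Z.eq_dec (z - z0) 0 then a z else 0) = a z0.
Proof.
  induction L as [|x L IH]; intros Hd Hi; [destruct Hi|].
  inversion Hd as [|? ? Hx HL]; subst. rewrite sumL_cons.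
  destruct (Z.eq_dec (x - z0) 0) as [E|E].
  - assert (x = z0) by lia. subst.
    rewrite (sumL_ext _ _ (fun _ => 0)), sumL_const; [ring|].
    intros i Hi'. destruct (Z.eq_dec (i - z0) 0); [|reflexivity].
    assert (i = z0) by lia. subst; contradiction.
  - destruct Hi as [Hi|Hi]; [lia|]. rewrite IH by auto. ring.
Qed.

Lemma zrange_S M : zrange (S M) = (- Z.of_nat (S M))%Z :: zrange M ++ (Z.of_nat (S M) :: nil).
Proof.
  unfold zrange. replace (2 * S M + 1)%nat with (S ((2 * M + 1) + 1)) by lia.
  rewrite <- cons_seq, seq_app, map_cons, map_app. simpl map at 3.
  f_equal. rewrite <- seq_shift, map_map. f_equal.
  - apply map_ext. intros; lia.
  - cbn [seq map]. f_equal. lia.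
Qed.

Lemma zrange_in M m : In m (zrange M) <-> (Z.abs m <= Z.of_nat M)%Z.
Proof.
  unfold zrange. rewrite in_map_iff. split.
  - intros [i [Hi Hs]]. apply in_seq in Hs. lia.
  - intros H. exists (Z.to_nat (m + Z.of_nat M)). split; [lia|]. apply in_seq. lia.
Qed.

Lemma zrange_nodup M : NoDup (zrange M).
Proof.
  apply NoDup_map_NoDup_ForallPairs; [|apply seq_NoDup].
  intros a b _ _ H. lia.
Qed.

Lemma sumL_zrange_abs M (h : nat -> R) :
  sumL (zrange M) (fun m => h (Z.abs_nat m)) = h 0%nat + 2 * sumL (seq 1 M) h.
Proof.
  induction M as [|M IH]; [unfold sumL; simpl; ring|].
  rewrite zrange_S, sumL_cons, sumL_app, IH, sumL_cons, sumL_nil, seq_S, sumL_app, sumL_cons,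
    sumL_nil.
  replace (Z.abs_nat (- Z.of_nat (S M))) with (1 + M)%nat by lia.
  replace (Z.abs_nat (Z.of_nat (S M))) with (1 + M)%nat by lia. ring.
Qed.

(** * Fourier coefficients are bounded by the L^1 norm *)

Lemma continuous_of_Lipschitz (g : R -> R) K : 0 <= K ->
  (forall a b, Rabs (g a - g b) <= K * Rabs (a - b)) -> forall x, continuous g x.
Proof.
  intros HK Hg x. apply continuity_pt_filterlim, continuity_pt_locally. intros eps.
  assert (Hd : 0 < eps / (K + 1)) by (apply Rdiv_lt_0_compat; [apply cond_pos | lra]).
  exists (mkposreal _ Hd). intros y Hy.
  unfold ball in Hy; simpl in Hy; unfold AbsRing_ball, abs, minus, plus, opp in Hy; simpl in Hy.
  eapply Rle_lt_trans; [apply Hg|].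
  apply Rle_lt_trans with (K * (eps / (K + 1))).
  - apply Rmult_le_compat_l; [lra|]. replace (y - x) with (y + - x) by ring. lra.
  - pose proof (cond_pos eps). apply (Rmult_lt_reg_r (K + 1)); [lra|]. field_simplify; lra.
Qed.

Lemma ex_RInt_Lipschitz (g : R -> R) K : 0 <= K ->
  (forall a b, Rabs (g a - g b) <= K * Rabs (a - b)) -> forall a b, ex_RInt g a b.
Proof.
  intros HK Hg a b. apply (ex_RInt_continuous (V := R_CompleteNormedModule)).
  intros; eapply continuous_of_Lipschitz; eauto.
Qed.

Lemma cos_Lipschitz a b : Rabs (cos a - cos b) <= Rabs (a - b).
Proof.
  destruct (MVT_abs cos (fun x => - sin x) b a) as [c [Hc _]].
  { intros; apply derivable_pt_lim_cos. }
  rewrite Hc, Rabs_Ropp. pose proof (SIN_bound c).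
  assert (Rabs (sin c) <= 1) by (apply Rabs_le; lra).
  pose proof (Rabs_pos (a - b)). nra.
Qed.

Lemma sin_Lipschitz a b : Rabs (sin a - sin b) <= Rabs (a - b).
Proof.
  destruct (MVT_abs sin cos b a) as [c [Hc _]].
  { intros; apply derivable_pt_lim_sin. }
  rewrite Hc. pose proof (COS_bound c).
  assert (Rabs (cos c) <= 1) by (apply Rabs_le; lra).
  pose proof (Rabs_pos (a - b)). nra.
Qed.

Lemma Cmod_le_abs_fst_snd (z : C) : Cmod z <= Rabs (fst z) + Rabs (snd z).
Proof.
  pose proof (Rabs_pos (fst z)); pose proof (Rabs_pos (snd z)).
  unfold Cmod. rewrite <- (sqrt_Rsqr (Rabs (fst z) + Rabs (snd z))) by lra.
  apply sqrt_le_1_alt. unfold Rsqr. rewrite <- (pow2_abs (fst z)), <- (pow2_abs (snd z)). nra.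
Qed.

Lemma cexpi_Lipschitz a b : Cmod (Cminus (cexpi a) (cexpi b)) <= 2 * Rabs (a - b).
Proof.
  eapply Rle_trans; [apply Cmod_le_abs_fst_snd|]. simpl.
  pose proof (cos_Lipschitz a b). pose proof (sin_Lipschitz a b).
  replace (cos a + - cos b) with (cos a - cos b) by ring.
  replace (sin a + - sin b) with (sin a - sin b) by ring. lra.
Qed.

Lemma Cmod_cexpi t : Cmod (cexpi t) = 1.
Proof.
  unfold Cmod, cexpi; simpl fst; simpl snd.
  replace (cos t ^ 2 + sin t ^ 2) with 1; [apply sqrt_1|].
  rewrite <- (sin2_cos2 t). unfold Rsqr. ring.
Qed.

Lemma Cmod_Lipschitz (z w : C) : Rabs (Cmod z - Cmod w) <= Cmod (Cminus z w).
Proof.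
  assert (Hz : Cmod z <= Cmod (Cminus z w) + Cmod w).
  { replace z with (Cplus (Cminus z w) w) at 1
      by (destruct z, w; apply injective_projections; simpl; ring).
    apply Cmod_triangle. }
  assert (Hw : Cmod w <= Cmod (Cminus z w) + Cmod z).
  { replace w with (Cplus (Copp (Cminus z w)) z) at 1
      by (destruct z, w; apply injective_projections; simpl; ring).
    eapply Rle_trans; [apply Cmod_triangle|]. rewrite Cmod_opp. lra. }
  apply Rabs_le. lra.
Qed.

Definition trig_Lipschitz_const (M : nat) (c : Coef) : R :=
  boxsumR M (fun m n => Cmod (c m n) * (4 * PI * (Rabs (IZR m) + Rabs (IZR n)))).

Lemma trig_Lipschitz_const_ge0 M c : 0 <= trig_Lipschitz_const M c.
Proof.
  unfold trig_Lipschitz_const. rewrite boxsumR_sumL.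
  apply sumL_nonneg; intros m _; apply sumL_nonneg; intros n _.
  pose proof PI_RGT_0. pose proof (Cmod_ge_0 (c m n)).
  pose proof (Rabs_pos (IZR m)). pose proof (Rabs_pos (IZR n)).
  apply Rmult_le_pos; nra.
Qed.

Lemma trig_eval_Lipschitz M c x y x' y' :
  Cmod (Cminus (trig_eval M c x y) (trig_eval M c x' y'))
  <= trig_Lipschitz_const M c * (Rabs (x - x') + Rabs (y - y')).
Proof.
  pose proof PI_RGT_0.
  pose proof (Rabs_pos (x - x')). pose proof (Rabs_pos (y - y')).
  unfold trig_eval, trig_Lipschitz_const. rewrite !boxsumC_sumLC, boxsumR_sumL.
  rewrite sumLC_minus, (Rmult_comm (sumL _ _)), <- sumL_scal.
  eapply Rle_trans; [apply Cmod_sumLC|]. apply sumL_le. intros m _.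
  rewrite sumLC_minus, <- sumL_scal.
  eapply Rle_trans; [apply Cmod_sumLC|]. apply sumL_le. intros n _.
  set (e := Cminus (cexpi (2 * PI * (IZR m * x + IZR n * y)))
                   (cexpi (2 * PI * (IZR m * x' + IZR n * y')))).
  replace (Cminus _ _) with (Cmult (c m n) e)
    by (unfold e; destruct (c m n); apply injective_projections; simpl; ring).
  assert (He : Cmod e
    <= 4 * PI * ((Rabs (IZR m) + Rabs (IZR n)) * (Rabs (x - x') + Rabs (y - y')))).
  { unfold e. eapply Rle_trans; [apply cexpi_Lipschitz|].
    replace (2 * PI * (IZR m * x + IZR n * y) - 2 * PI * (IZR m * x' + IZR n * y'))
      with (2 * PI * (IZR m * (x - x') + IZR n * (y - y'))) by ring.
    rewrite !Rabs_mult, (Rabs_right 2), (Rabs_right PI) by lra.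
    assert (Rabs (IZR m * (x - x') + IZR n * (y - y'))
            <= (Rabs (IZR m) + Rabs (IZR n)) * (Rabs (x - x') + Rabs (y - y'))).
    { eapply Rle_trans; [apply Rabs_triang|]. rewrite !Rabs_mult.
      pose proof (Rabs_pos (IZR m)). pose proof (Rabs_pos (IZR n)). nra. }
    nra. }
  rewrite Cmod_mult. pose proof (Cmod_ge_0 (c m n)).
  eapply Rle_trans; [apply Rmult_le_compat_l; [assumption | exact He]|]. right; ring.
Qed.

Lemma ex_RInt_trig_abs_y M c x a b : ex_RInt (fun y => Cmod (trig_eval M c x y)) a b.
Proof.
  apply (ex_RInt_Lipschitz _ (trig_Lipschitz_const M c)); [apply trig_Lipschitz_const_ge0|].
  intros y y'. eapply Rle_trans; [apply Cmod_Lipschitz|].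
  eapply Rle_trans; [apply trig_eval_Lipschitz|].
  rewrite Rminus_diag, Rabs_R0, Rplus_0_l. lra.
Qed.

Lemma ex_RInt_trig_abs_xy M c :
  ex_RInt (fun x => RInt (fun y => Cmod (trig_eval M c x y)) 0 1) 0 1.
Proof.
  apply (ex_RInt_Lipschitz _ (trig_Lipschitz_const M c)); [apply trig_Lipschitz_const_ge0|].
  intros a b.
  rewrite <- (RInt_minus (V := R_CompleteNormedModule)) by apply ex_RInt_trig_abs_y.
  assert (Hint := ex_RInt_minus (V := R_CompleteNormedModule)
    _ _ 0 1 (ex_RInt_trig_abs_y M c a 0 1) (ex_RInt_trig_abs_y M c b 0 1)).
  eapply Rle_trans; [apply abs_RInt_le; [lra | exact Hint]|].
  apply Rle_trans with (RInt (fun _ => trig_Lipschitz_const M c * Rabs (a - b)) 0 1).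
  - apply RInt_le; [lra | apply ex_RInt_norm, Hint | apply ex_RInt_const |].
    intros y _. eapply Rle_trans; [apply Cmod_Lipschitz|].
    eapply Rle_trans; [apply trig_eval_Lipschitz|].
    rewrite Rminus_diag, Rabs_R0, Rplus_0_r. lra.
  - rewrite RInt_const. unfold scal; simpl; unfold mult; simpl. lra.
Qed.

Lemma is_RInt_const_01 (a : R) : is_RInt (fun _ => a) 0 1 a.
Proof.
  pose proof (is_RInt_const (V := R_NormedModule) 0 1 a) as H.
  unfold scal in H; simpl in H; unfold mult in H; simpl in H.
  rewrite Rminus_0_r, Rmult_1_l in H. exact H.
Qed.

Lemma is_RInt_sumL {A} (L : list A) (f : A -> R -> R) (v : A -> R) :
  (forall i, In i L -> is_RInt (f i) 0 1 (v i)) ->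
  is_RInt (fun y => sumL L (fun i => f i y)) 0 1 (sumL L v).
Proof.
  induction L as [|x L IH]; intros H; [apply is_RInt_const_01|].
  apply (is_RInt_plus (V := R_NormedModule)); [apply H; simpl; auto|].
  apply IH. intros; apply H; simpl; auto.
Qed.

Lemma sin_2PI_IZR (q : Z) : sin (2 * PI * IZR q) = 0.
Proof. apply sin_eq_0_1. exists (2 * q)%Z. rewrite mult_IZR. ring. Qed.

Lemma cos_2PI_IZR (q : Z) : cos (2 * PI * IZR q) = 1.
Proof.
  replace (2 * PI * IZR q) with (2 * (IZR q * PI)) by ring.
  rewrite cos_2a_sin, sin_eq_0_1 by (exists q; reflexivity). ring.
Qed.

Lemma is_RInt_trig P Q s (q : Z) :
  is_RInt (fun y => P * cos (s + 2 * PI * IZR q * y) + Q * sin (s + 2 * PI * IZR q * y)) 0 1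
    (if Z.eq_dec q 0 then P * cos s + Q * sin s else 0).
Proof.
  pose proof PI_RGT_0.
  destruct (Z.eq_dec q 0) as [->|Hq].
  - eapply is_RInt_ext; [|apply is_RInt_const_01].
    intros y _. simpl. rewrite Rmult_0_r, Rmult_0_l, Rplus_0_r. reflexivity.
  - assert (Hb : 2 * PI * IZR q <> 0).
    { apply Rmult_integral_contrapositive_currified; [lra | apply not_0_IZR; auto]. }
    set (F y := (P * sin (s + 2 * PI * IZR q * y) - Q * cos (s + 2 * PI * IZR q * y))
                / (2 * PI * IZR q)).
    assert (Hperiod : sin (s + 2 * PI * IZR q) = sin s /\ cos (s + 2 * PI * IZR q) = cos s).
    { rewrite sin_plus, cos_plus, sin_2PI_IZR, cos_2PI_IZR. split; ring. }
    assert (Hderiv := is_RInt_derive (V := R_CompleteNormedModule) F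
      (fun y => P * cos (s + 2 * PI * IZR q * y) + Q * sin (s + 2 * PI * IZR q * y)) 0 1).
    unfold minus, plus, opp in Hderiv; simpl in Hderiv.
    replace (F 1 + - F 0) with 0 in Hderiv; [apply Hderiv|..].
    + intros z _. unfold F. auto_derive; [auto|]. field. split; [apply not_0_IZR; exact Hq | lra].
    + intros z _. apply (ex_derive_continuous (K := R_AbsRing) (V := R_NormedModule)).
      auto_derive. auto.
    + unfold F. rewrite Rmult_1_r, Rmult_0_r, Rplus_0_r, (proj1 Hperiod), (proj2 Hperiod).
      field. split; [apply not_0_IZR; exact Hq | lra].
Qed.

Lemma pairing_le_Cmod u v (z : C) : u ^ 2 + v ^ 2 <= 1 -> u * fst z + v * snd z <= Cmod z.
Proof.
  intros Huv. unfold Cmod. destruct (Rle_dec (u * fst z + v * snd z) 0).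
  - pose proof (sqrt_pos (fst z ^ 2 + snd z ^ 2)). lra.
  - rewrite <- (sqrt_pow2 (u * fst z + v * snd z)) by lra. apply sqrt_le_1_alt.
    pose proof (pow2_ge_0 (fst z)). pose proof (pow2_ge_0 (snd z)).
    assert ((u * fst z + v * snd z) ^ 2 <= (u ^ 2 + v ^ 2) * (fst z ^ 2 + snd z ^ 2)).
    { pose proof (pow2_ge_0 (u * snd z - v * fst z)). nra. }
    nra.
Qed.

Section FourierCoefficient.
Variables (M : nat) (c : Coef) (m0 n0 : Z) (u v : R).
Hypotheses (Hm0 : (Z.abs m0 <= Z.of_nat M)%Z) (Hn0 : (Z.abs n0 <= Z.of_nat M)%Z).

Definition paired x y : R :=
  let z := Cmult (trig_eval M c x y) (cexpi (- (2 * PI * (IZR m0 * x + IZR n0 * y)))) in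
  u * fst z + v * snd z.

Let P m n := u * fst (c m n) + v * snd (c m n).
Let Q m n := v * fst (c m n) - u * snd (c m n).

Lemma paired_expand x y : paired x y = sumL (zrange M) (fun m => sumL (zrange M) (fun n =>
  P m n * cos (2 * PI * IZR (m - m0) * x + 2 * PI * IZR (n - n0) * y)
  + Q m n * sin (2 * PI * IZR (m - m0) * x + 2 * PI * IZR (n - n0) * y))).
Proof.
  unfold paired, trig_eval. rewrite boxsumC_sumLC. cbv beta zeta.
  rewrite sumLC_mult, fst_sumLC, snd_sumLC, <- !sumL_scal, <- sumL_plus.
  apply sumL_ext. intros m _.
  rewrite sumLC_mult, fst_sumLC, snd_sumLC, <- !sumL_scal, <- sumL_plus.
  apply sumL_ext. intros n _. unfold P, Q.
  replace (2 * PI * IZR (m - m0) * x + 2 * PI * IZR (n - n0) * y) with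
    (2 * PI * (IZR m * x + IZR n * y) + - (2 * PI * (IZR m0 * x + IZR n0 * y)))
    by (rewrite !minus_IZR; ring).
  rewrite cos_plus, sin_plus. destruct (c m n). unfold cexpi, Cmult; simpl. ring.
Qed.

Lemma is_RInt_paired_y x : is_RInt (paired x) 0 1 (sumL (zrange M) (fun m =>
  P m n0 * cos (2 * PI * IZR (m - m0) * x) + Q m n0 * sin (2 * PI * IZR (m - m0) * x))).
Proof.
  pose (a m n := P m n * cos (2 * PI * IZR (m - m0) * x) + Q m n * sin (2 * PI * IZR (m - m0) * x)).
  change (is_RInt (paired x) 0 1 (sumL (zrange M) (fun m => a m n0))).
  replace (sumL (zrange M) (fun m => a m n0)) with (sumL (zrange M) (fun m =>
    sumL (zrange M) (fun n => if Z.eq_dec (n - n0) 0 then a m n else 0))).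
  - eapply is_RInt_ext; [intros y _; symmetry; apply paired_expand|].
    apply is_RInt_sumL. intros m _. apply is_RInt_sumL. intros n _. apply is_RInt_trig.
  - apply sumL_ext. intros m _.
    apply (sumL_delta _ (a m)); [apply zrange_nodup | apply zrange_in; assumption].
Qed.

Lemma is_RInt_paired : is_RInt (fun x => RInt (paired x) 0 1) 0 1 (P m0 n0).
Proof.
  eapply is_RInt_ext; [intros x _; symmetry; apply is_RInt_unique, is_RInt_paired_y|].
  replace (P m0 n0) with (sumL (zrange M) (fun m =>
    if Z.eq_dec (m - m0) 0 then P m n0 * cos 0 + Q m n0 * sin 0 else 0)).
  - apply is_RInt_sumL. intros m _.
    eapply is_RInt_ext; [|apply (is_RInt_trig _ _ 0 (m - m0))].
    intros x _. cbv beta. rewrite !Rplus_0_l. reflexivity.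
  - rewrite (sumL_delta _ (fun m => P m n0 * cos 0 + Q m n0 * sin 0));
      [|apply zrange_nodup | apply zrange_in; assumption].
    rewrite cos_0, sin_0. ring.
Qed.

Lemma pairing_coef_le_L1norm : u ^ 2 + v ^ 2 <= 1 -> P m0 n0 <= L1norm M c.
Proof.
  intros Huv. rewrite <- (is_RInt_unique _ _ _ _ is_RInt_paired). unfold L1norm.
  apply RInt_le; [lra | eexists; apply is_RInt_paired | apply ex_RInt_trig_abs_xy |].
  intros x _. apply RInt_le;
    [lra | eexists; apply is_RInt_paired_y | apply ex_RInt_trig_abs_y |].
  intros y _. unfold paired. eapply Rle_trans; [apply pairing_le_Cmod; exact Huv|].
  rewrite Cmod_mult, Cmod_cexpi. lra.
Qed.

End FourierCoefficient.

Lemma Cmod_coef_le_L1norm M c m n : (Z.abs m <= Z.of_nat M)%Z -> (Z.abs n <= Z.of_nat M)%Z ->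
  Cmod (c m n) <= L1norm M c.
Proof.
  intros Hm Hn. set (r := Cmod (c m n)). set (a := fst (c m n)). set (b := snd (c m n)).
  assert (Hr : r ^ 2 = a ^ 2 + b ^ 2).
  { unfold r, Cmod. fold a b. rewrite pow2_sqrt; [reflexivity|].
    pose proof (pow2_ge_0 a). pose proof (pow2_ge_0 b). lra. }
  (* Pair with (u, v) = (a, b) / r; if r = 0 this is (0, 0) because / 0 = 0. *)
  pose proof (pairing_coef_le_L1norm M c m n (a / r) (b / r) Hm Hn) as H.
  cbv beta in H. fold a b in H.
  destruct (Req_dec r 0) as [Hr0|Hr0].
  - rewrite Hr0 in H |- *. unfold Rdiv in H. rewrite Rinv_0 in H. lra.
  - replace (a / r * a + b / r * b) with ((a ^ 2 + b ^ 2) / r) in H by (field; auto).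
    rewrite <- Hr in H. replace (r ^ 2 / r) with r in H by (field; auto).
    apply H. right. transitivity ((a ^ 2 + b ^ 2) / r ^ 2); [field; auto|].
    rewrite <- Hr. field. auto.
Qed.

(** * Summability of the anisotropic kernel *)

(* Telescoping: p^(k-1) <= p^k - (p-1)^k, so the p-th term is at most
   1 / ((p-1)^k + B) - 1 / (p^k + B). *)
Lemma sum_pow_ratio_le (k : nat) (B : R) M : (1 <= k)%nat -> 0 < B ->
  sumL (seq 1 M) (fun p => INR p ^ (k - 1) / (INR p ^ k + B) ^ 2) <= / B - / (INR M ^ k + B).
Proof.
  intros Hk HB. induction M as [|M IH].
  - cbn [seq]. rewrite sumL_nil. destruct k as [|k]; [lia|].
    simpl. rewrite Rmult_0_l, Rplus_0_l. lra.
  - rewrite seq_S, sumL_app, sumL_cons, sumL_nil. replace (1 + M)%nat with (S M) by lia.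
    set (Y := INR M ^ k). set (X := INR (S M) ^ k). set (Z0 := INR (S M) ^ (k - 1)).
    assert (HY : 0 <= Y) by (apply pow_le, pos_INR).
    assert (HYX : Y <= X) by (apply pow_incr; split; [apply pos_INR | rewrite S_INR; lra]).
    assert (HZ0 : 0 <= Z0) by (apply pow_le, pos_INR).
    assert (HZ : Z0 <= X - Y).
    { unfold X, Y, Z0. destruct k as [|k]; [lia|]. replace (S k - 1)%nat with k by lia.
      rewrite <- !tech_pow_Rmult.
      assert (INR M ^ k <= INR (S M) ^ k)
        by (apply pow_incr; split; [apply pos_INR | rewrite S_INR; lra]).
      rewrite S_INR in *. pose proof (pos_INR M). nra. }
    assert (Hterm : Z0 / (X + B) ^ 2 <= / (Y + B) - / (X + B)).
    { apply (Rmult_le_reg_r ((X + B) ^ 2 * (Y + B))); [apply Rmult_lt_0_compat; nra|].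
      field_simplify; [nra | lra | lra]. }
    unfold Y in Hterm. lra.
Qed.

Lemma inv_sqr_le_telescope t : 1 <= t -> / t ^ 2 <= 2 / t - 2 / (t + 1).
Proof.
  intros Ht. replace (2 / t - 2 / (t + 1)) with (2 * / (t * (t + 1))) by (field; lra).
  replace (/ t ^ 2) with (2 * / (2 * t ^ 2)) by (field; lra).
  apply Rmult_le_compat_l; [lra|]. apply Rinv_le_contravar; nra.
Qed.

Lemma sum_inv_pow_le (l : nat) M : (2 <= l)%nat ->
  sumL (seq 1 M) (fun q => / INR q ^ l) <= 2 - 2 / (INR M + 1).
Proof.
  intros Hl. induction M as [|M IH]; [cbn [seq]; rewrite sumL_nil; simpl; lra|].
  rewrite seq_S, sumL_app, sumL_cons, sumL_nil. replace (1 + M)%nat with (S M) by lia.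
  rewrite S_INR in *. pose proof (pos_INR M).
  assert (H2 : (INR M + 1) ^ 2 <= (INR M + 1) ^ l).
  { replace l with (2 + (l - 2))%nat by lia. rewrite pow_add.
    assert (1 <= (INR M + 1) ^ (l - 2)) by (apply pow_R1_Rle; lra). nra. }
  assert (/ (INR M + 1) ^ l <= 2 / (INR M + 1) - 2 / (INR M + 1 + 1)).
  { apply Rle_trans with (/ (INR M + 1) ^ 2); [apply Rinv_le_contravar; nra|].
    apply inv_sqr_le_telescope; lra. }
  lra.
Qed.

Definition kernel (k l : nat) (p q : nat) : R :=
  if (Nat.eqb p 0 || Nat.eqb q 0)%bool then 0
  else INR p ^ (k - 1) / (INR p ^ k + INR q ^ l) ^ 2.

Lemma kernel_pos_pos k l p q : (0 < p)%nat -> (0 < q)%nat ->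
  kernel k l p q = INR p ^ (k - 1) / (INR p ^ k + INR q ^ l) ^ 2.
Proof.
  intros Hp Hq. unfold kernel.
  replace (Nat.eqb p 0) with false by (symmetry; apply Nat.eqb_neq; lia).
  replace (Nat.eqb q 0) with false by (symmetry; apply Nat.eqb_neq; lia). reflexivity.
Qed.

(* The factor 4 counts the signs of m and n; the sum over m then telescopes to at most
   n^(-l), which is summable since l > 1. *)
Lemma boxsumR_kernel_le (k l : nat) M : (1 <= k)%nat -> (2 <= l)%nat ->
  boxsumR M (fun m n => kernel k l (Z.abs_nat m) (Z.abs_nat n)) <= 8.
Proof.
  intros Hk Hl. rewrite boxsumR_sumL.
  rewrite (sumL_zrange_abs M (fun p => sumL (zrange M) (fun n => kernel k l p (Z.abs_nat n)))).
  cbv beta. rewrite (sumL_zrange_abs M (kernel k l 0)).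
  rewrite (sumL_ext _ (kernel k l 0) (fun _ => 0)), sumL_const by reflexivity.
  rewrite (sumL_ext (seq 1 M) (fun p => sumL (zrange M) (fun n => kernel k l p (Z.abs_nat n)))
             (fun p => 2 * sumL (seq 1 M) (fun q => kernel k l p q))).
  2:{ intros p _. rewrite (sumL_zrange_abs M (kernel k l p)). unfold kernel at 1.
      rewrite Nat.eqb_refl, Bool.orb_true_r, Rplus_0_l. reflexivity. }
  rewrite sumL_scal, sumL_swap, Rmult_0_r, Rplus_0_l.
  assert (Hsum : sumL (seq 1 M) (fun q => sumL (seq 1 M) (fun p => kernel k l p q)) <= 2).
  { apply Rle_trans with (sumL (seq 1 M) (fun q => / INR q ^ l)).
    - apply sumL_le. intros q Hq. apply in_seq in Hq.
      assert (HB : 0 < INR q ^ l) by (apply pow_lt, lt_0_INR; lia).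
      rewrite (sumL_ext _ _ (fun p => INR p ^ (k - 1) / (INR p ^ k + INR q ^ l) ^ 2))
        by (intros p Hp; apply in_seq in Hp; apply kernel_pos_pos; lia).
      eapply Rle_trans; [apply sum_pow_ratio_le; auto|].
      assert (0 < / (INR M ^ k + INR q ^ l)).
      { apply Rinv_0_lt_compat. pose proof (pow_le (INR M) k (pos_INR M)). lra. }
      lra.
    - eapply Rle_trans; [apply sum_inv_pow_le; auto|].
      pose proof (pos_INR M). assert (0 < 2 / (INR M + 1)) by (apply Rdiv_lt_0_compat; lra).
      lra. }
  lra.
Qed.

(** * The chain of equations, frequency by frequency *)

(* Propagate from the end of the chain whose coefficient (A or B) dominates:
   each step adds at most D. *)
Lemma chain_bound (N : nat) (A B D : R) (x : nat -> R) :
  0 <= D -> (forall j, 0 <= x j) ->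
  A * x 1%nat <= D ->
  (forall j, (1 <= j <= N - 1)%nat -> A * x (S j) <= B * x j + D) ->
  (forall j, (1 <= j <= N - 1)%nat -> B * x j <= A * x (S j) + D) ->
  B * x N <= D ->
  forall j, (1 <= j <= N)%nat -> x j * (A + B) <= 2 * INR N * D.
Proof.
  intros HD Hx Hfirst Hup Hdown Hlast.
  destruct (Rle_dec B A) as [HBA|HAB].
  - assert (Hind : forall j, (1 <= j <= N)%nat -> A * x j <= INR j * D).
    { induction j as [|j IH]; intros Hj; [lia|].
      destruct j as [|j]; [simpl; lra|].
      specialize (Hup (S j) ltac:(lia)). specialize (IH ltac:(lia)). specialize (Hx (S j)).
      rewrite S_INR. nra. }
    intros j Hj. specialize (Hind j Hj). specialize (Hx j).
    assert (INR j <= INR N) by (apply le_INR; lia). nra.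
  - assert (Hind : forall i, (i <= N - 1)%nat -> B * x (N - i)%nat <= INR (S i) * D).
    { induction i as [|i IH]; intros Hi.
      - rewrite Nat.sub_0_r. simpl. lra.
      - specialize (Hdown (N - S i)%nat ltac:(lia)).
        replace (S (N - S i)) with (N - i)%nat in Hdown by lia.
        specialize (IH ltac:(lia)). specialize (Hx (N - i)%nat).
        rewrite S_INR. nra. }
    intros j Hj. specialize (Hind (N - j)%nat ltac:(lia)).
    replace (N - (N - j))%nat with j in Hind by lia. specialize (Hx j).
    assert (INR (S (N - j)) <= INR N) by (apply le_INR; lia). nra.
Qed.

Lemma Cmod_le_of_Cminus z w r : Cminus z w = r ->
  Cmod w <= Cmod z + Cmod r /\ Cmod z <= Cmod w + Cmod r.
Proof.
  intros H. split.
  - replace w with (Cplus z (Copp r))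
      by (subst; destruct z, w; apply injective_projections; simpl; ring).
    eapply Rle_trans; [apply Cmod_triangle|]. rewrite Cmod_opp. lra.
  - replace z with (Cplus w r)
      by (subst; destruct z, w; apply injective_projections; simpl; ring).
    apply Cmod_triangle.
Qed.

Lemma Cmod_Cpown z k : Cmod (Cpown z k) = Cmod z ^ k.
Proof. induction k as [|k IH]; simpl; [apply Cmod_1|]. rewrite Cmod_mult, IH. ring. Qed.

Lemma Cmod_symbol (m : Z) k : Cmod (Cpown (0, 2 * PI * IZR m) k) = (2 * PI * Rabs (IZR m)) ^ k.
Proof.
  rewrite Cmod_Cpown. f_equal. unfold Cmod; simpl fst; simpl snd.
  replace (0 ^ 2 + (2 * PI * IZR m) ^ 2) with (Rsqr (2 * PI * IZR m)) by (unfold Rsqr; ring).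
  rewrite sqrt_Rsqr_abs, !Rabs_mult, (Rabs_right 2), (Rabs_right PI) by (pose proof PI_RGT_0; lra).
  reflexivity.
Qed.

Lemma Rabs_IZR_INR (m : Z) : Rabs (IZR m) = INR (Z.abs_nat m).
Proof. rewrite <- abs_IZR, INR_IZR_INZ. f_equal. lia. Qed.

Lemma pow_abs_le_symbol (m : Z) k : INR (Z.abs_nat m) ^ k <= (2 * PI * Rabs (IZR m)) ^ k.
Proof.
  rewrite Rabs_IZR_INR. pose proof (pos_INR (Z.abs_nat m)). pose proof PI2_1.
  apply pow_incr. split; [assumption | nra].
Qed.

Lemma Rpower_weight_le k (m : Z) : (1 <= k)%nat -> m <> 0%Z ->
  Rpower (1 + IZR m ^ 2) ((INR k - 1) / 2) <= 2 ^ (k - 1) * INR (Z.abs_nat m) ^ (k - 1).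
Proof.
  intros Hk Hm. set (x := 1 + IZR m ^ 2).
  assert (Hx : 0 < x) by (unfold x; pose proof (pow2_ge_0 (IZR m)); lra).
  replace ((INR k - 1) / 2) with (/ 2 * INR (k - 1)) by (rewrite minus_INR by lia; simpl; field).
  rewrite <- Rpower_mult, Rpower_sqrt, Rpower_pow by (try apply sqrt_lt_R0; auto).
  rewrite <- Rpow_mult_distr. apply pow_incr. split; [apply sqrt_pos|].
  set (p := INR (Z.abs_nat m)).
  assert (Hp : 1 <= p) by (unfold p; replace 1 with (INR 1) by reflexivity; apply le_INR; lia).
  assert (Hm2 : IZR m ^ 2 = p ^ 2) by (unfold p; rewrite <- Rabs_IZR_INR, pow2_abs; reflexivity).
  rewrite <- (sqrt_pow2 (2 * p)) by lra. apply sqrt_le_1_alt. unfold x. rewrite Hm2. nra.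
Qed.

Lemma L1norm_ge0 M c : 0 <= L1norm M c.
Proof.
  eapply Rle_trans; [apply (Cmod_ge_0 (c 0%Z 0%Z))|].
  apply Cmod_coef_le_L1norm; simpl; lia.
Qed.

Section ChainSystem.
Variables (k l N M : nat) (mu phi : nat -> Coef).
Hypothesis Hk : (0 < k)%nat.
Hypothesis Hl : (1 < l)%nat.
Hypothesis Hphi : forall j, (1 <= j <= N)%nat -> proper (phi j).
Hypothesis Heq_first : forall m n, Copp (dpar1 k (phi 1%nat) m n) = mu 0%nat m n.
Hypothesis Heq_mid : forall j, (1 <= j <= N - 1)%nat ->
  forall m n, Cminus (dpar2 l (phi j) m n) (dpar1 k (phi (S j)) m n) = mu j m n.
Hypothesis Heq_last : forall m n, dpar2 l (phi N) m n = mu N m n.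

Let D := sumR 0 N (fun j => L1norm M (mu j)).

Lemma data_ge0 : 0 <= D.
Proof. apply sumL_nonneg. intros; apply L1norm_ge0. Qed.

Lemma Cmod_mu_le j m n : (j <= N)%nat ->
  (Z.abs m <= Z.of_nat M)%Z -> (Z.abs n <= Z.of_nat M)%Z -> Cmod (mu j m n) <= D.
Proof.
  intros Hj Hm Hn. eapply Rle_trans; [apply Cmod_coef_le_L1norm; eauto|].
  apply (sumL_ge_term _ (fun j => L1norm M (mu j))); [intros; apply L1norm_ge0|].
  apply in_seq. lia.
Qed.

Lemma Cmod_phi_symbol_le j m n : (1 <= j <= N)%nat ->
  (Z.abs m <= Z.of_nat M)%Z -> (Z.abs n <= Z.of_nat M)%Z ->
  Cmod (phi j m n) * (Cmod (Cpown (0, 2 * PI * IZR m) k) + Cmod (Cpown (0, 2 * PI * IZR n) l))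
  <= 2 * INR N * D.
Proof.
  intros Hj Hm Hn.
  assert (Hmid : forall i, (1 <= i <= N - 1)%nat ->
    Cmod (Cpown (0, 2 * PI * IZR m) k) * Cmod (phi (S i) m n)
      <= Cmod (Cpown (0, 2 * PI * IZR n) l) * Cmod (phi i m n) + D /\
    Cmod (Cpown (0, 2 * PI * IZR n) l) * Cmod (phi i m n)
      <= Cmod (Cpown (0, 2 * PI * IZR m) k) * Cmod (phi (S i) m n) + D).
  { intros i Hi. pose proof (Cmod_le_of_Cminus _ _ _ (Heq_mid i Hi m n)) as Hb.
    unfold dpar1, dpar2 in Hb. rewrite !Cmod_mult in Hb.
    pose proof (Cmod_mu_le i m n ltac:(lia) Hm Hn). lra. }
  apply (chain_bound N _ _ D (fun j => Cmod (phi j m n))); auto.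
  - apply data_ge0.
  - intros; apply Cmod_ge_0.
  - rewrite <- Cmod_mult. fold (dpar1 k (phi 1%nat) m n). rewrite <- Cmod_opp, Heq_first.
    apply Cmod_mu_le; auto; lia.
  - intros i Hi. apply (Hmid i Hi).
  - intros i Hi. apply (Hmid i Hi).
  - rewrite <- Cmod_mult. fold (dpar2 l (phi N) m n). rewrite Heq_last.
    apply Cmod_mu_le; auto.
Qed.

Lemma weighted_phi_coef_le j m n : (1 <= j <= N)%nat ->
  (Z.abs m <= Z.of_nat M)%Z -> (Z.abs n <= Z.of_nat M)%Z ->
  Rpower (1 + IZR m ^ 2) ((INR k - 1) / 2) * Rpower (1 + IZR n ^ 2) 0 * Cmod (phi j m n) ^ 2
  <= D ^ 2 * (4 * INR N ^ 2 * 2 ^ (k - 1)) * kernel k l (Z.abs_nat m) (Z.abs_nat n).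
Proof.
  intros Hj Hm Hn.
  rewrite Rpower_O, Rmult_1_r by (pose proof (pow2_ge_0 (IZR n)); lra).
  pose proof data_ge0.
  destruct (Z.eq_dec m 0) as [Em|Em]; [|destruct (Z.eq_dec n 0) as [En|En]].
  - rewrite (Hphi j Hj m n (or_introl Em)), Cmod_0. subst. unfold kernel. simpl. right; ring.
  - rewrite (Hphi j Hj m n (or_intror En)), Cmod_0. subst. unfold kernel.
    rewrite Bool.orb_true_r. right; ring.
  - set (p := Z.abs_nat m). set (q := Z.abs_nat n).
    rewrite kernel_pos_pos by lia.
    set (E := INR p ^ k + INR q ^ l). set (x := Cmod (phi j m n)).
    assert (HE : 0 < E).
    { unfold E. pose proof (pow_lt (INR p) k ltac:(apply lt_0_INR; lia)).
      pose proof (pow_lt (INR q) l ltac:(apply lt_0_INR; lia)). lra. }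
    assert (Hx : 0 <= x) by apply Cmod_ge_0.
    assert (HxE : x * E <= 2 * INR N * D).
    { eapply Rle_trans; [|apply (Cmod_phi_symbol_le j m n Hj Hm Hn)].
      apply Rmult_le_compat_l; [exact Hx|]. rewrite !Cmod_symbol.
      pose proof (pow_abs_le_symbol m k) as Hpm. pose proof (pow_abs_le_symbol n l) as Hqn.
      fold p in Hpm. fold q in Hqn. unfold E. lra. }
    assert (Hx2 : x ^ 2 <= (2 * INR N * D) ^ 2 / E ^ 2).
    { apply (Rmult_le_reg_r (E ^ 2)); [nra|].
      unfold Rdiv. rewrite Rmult_assoc, Rinv_l, Rmult_1_r by (apply pow_nonzero; lra).
      replace (x ^ 2 * E ^ 2) with ((x * E) ^ 2) by ring. apply pow_incr. nra. }
    pose proof (Rpower_weight_le k m ltac:(lia) Em) as Hw. fold p in Hw.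
    assert (Hw0 : 0 <= Rpower (1 + IZR m ^ 2) ((INR k - 1) / 2)) by (left; apply exp_pos).
    apply Rle_trans with (2 ^ (k - 1) * INR p ^ (k - 1) * ((2 * INR N * D) ^ 2 / E ^ 2)).
    + apply Rmult_le_compat; auto. apply pow2_ge_0.
    + right. unfold E. field. fold E. lra.
Qed.

Lemma Wnorm_phi_le j : (1 <= j <= N)%nat ->
  Wnorm M ((INR k - 1) / 2) 0 (phi j) <= D * sqrt (32 * INR N ^ 2 * 2 ^ (k - 1)).
Proof.
  intros Hj. pose proof data_ge0.
  pose proof (pow_le 2 (k - 1) ltac:(lra)). pose proof (pow2_ge_0 (INR N)).
  unfold Wnorm. rewrite <- (sqrt_pow2 D), <- sqrt_mult by (auto; try apply pow2_ge_0; nra).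
  apply sqrt_le_1_alt.
  eapply Rle_trans.
  { rewrite !boxsumR_sumL. apply sumL_le. intros m Hm. apply sumL_le. intros n Hn.
    apply zrange_in in Hm, Hn. apply weighted_phi_coef_le; auto. }
  rewrite (sumL_ext _ _ (fun m => (D ^ 2 * (4 * INR N ^ 2 * 2 ^ (k - 1))) *
      sumL (zrange M) (fun n => kernel k l (Z.abs_nat m) (Z.abs_nat n))))
    by (intros; apply sumL_scal).
  rewrite sumL_scal, <- boxsumR_sumL.
  apply Rle_trans with (D ^ 2 * (4 * INR N ^ 2 * 2 ^ (k - 1)) * 8); [|right; ring].
  apply Rmult_le_compat_l; [|apply boxsumR_kernel_le; lia].
  apply Rmult_le_pos; [apply pow2_ge_0 | nra].
Qed.

End ChainSystem.

Theorem lemma10 :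
  forall (k l N : nat), (0 < k)%nat -> (1 < l)%nat -> (0 < N)%nat ->
  exists Cst : R,
  forall (M : nat) (mu phi : nat -> Coef),
    (forall j, (j <= N)%nat -> supported M (mu j) /\ proper (mu j)) ->
    (forall j, (1 <= j <= N)%nat -> supported M (phi j) /\ proper (phi j)) ->
    (forall m n, Copp (dpar1 k (phi 1%nat) m n) = mu 0%nat m n) ->
    (forall j, (1 <= j <= N - 1)%nat ->
       forall m n, Cminus (dpar2 l (phi j) m n) (dpar1 k (phi (S j)) m n) = mu j m n) ->
    (forall m n, dpar2 l (phi N) m n = mu N m n) ->
    sumR 1 N (fun j => Wnorm M ((INR k - 1) / 2) 0 (phi j))
      <= Cst * sumR 0 N (fun j => L1norm M (mu j)).
Proof.
  intros k l N Hk Hl HN.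
  set (K := sqrt (32 * INR N ^ 2 * 2 ^ (k - 1))).
  exists (INR N * K).
  intros M mu phi _ Hphi Heq_first Heq_mid Heq_last.
  assert (Hproper : forall j, (1 <= j <= N)%nat -> proper (phi j)) by (intros; apply Hphi; auto).
  set (D := sumR 0 N (fun j => L1norm M (mu j))).
  apply Rle_trans with (sumR 1 N (fun _ => D * K)).
  - apply sumL_le. intros j Hj. apply in_seq in Hj.
    apply (Wnorm_phi_le k l N M mu phi); auto; lia.
  - rewrite sumR_sumL, sumL_const, length_seq. replace (S N - 1)%nat with N by lia.
    right. ring.
Qed.
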